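(* For all $n\ge 2$, $PT_n=\ker(\varphi_{PT})$ is isomorphic to $PL_n=\ker(\psi_P)$.
   Context: For $n\ge 2$, the twisted virtual braid group $TVB_n$ is the group with generators $\sigma_1,\dots,\sigma_{n-1}$, $\rho_1,\dots,\rho_{n-1}$, $\gamma_1,\dots,\gamma_n$ and defining relations: $\sigma_i\sigma_{i+1}\sigma_i=\sigma_{i+1}\sigma_i\sigma_{i+1}$ ($1\le i\le n-2$); $\sigma_i\sigma_j=\sigma_j\sigma_i$ ($|i-j|\ge 2$); $\rho_i^2=1$; $\rho_i\rho_j=\rho_j\rho_i$ ($|i-j|\ge2$); $\rho_i\rho_{i+1}\rho_i=\rho_{i+1}\rho_i\rho_{i+1}$ ($1\le i\le n-2$); $\sigma_i\rho_j=\rho_j\sigma_i$ ($|i-j|\ge 2$); $\rho_i\rho_{i+1}\sigma_i=\sigma_{i+1}\rho_i\rho_{i+1}$ ($1\le i\le n-2$); $\gamma_i^2=1$ and $\gamma_i\gamma_j=\gamma_j\gamma_i$ (all $i,j$); $\gamma_j\rho_i=\rho_i\gamma_j$ and $\gamma_j\sigma_i=\sigma_i\gamma_j$ for $j\notin\{i,i+1\}$; $\rho_i\gamma_i=\gamma_{i+1}\rho_i$ ($1\le i\le n-1$); $\rho_i\sigma_i\rho_i=\gamma_{i+1}\gamma_i\sigma_i\gamma_i\gamma_{i+1}$ ($1\le i\le n-1$). $TVP_n$ is the kernel of $\varphi_P:TVB_n\to S_n$, $\sigma_i,\rho_i\mapsto(i,i+1)$, $\gamma_j\mapsto e$. In $TVB_n$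 define $\lambda_{i,i+1}=\rho_i\sigma_i^{-1}$, $\lambda_{i+1,i}=\rho_i\lambda_{i,i+1}\rho_i$ ($1\le i\le n-1$), and for $1\le i<j-1\le n-1$: $\lambda_{ij}=\rho_{j-1}\cdots\rho_{i+1}\lambda_{i,i+1}\rho_{i+1}\cdots\rho_{j-1}$, $\lambda_{ji}=\rho_{j-1}\cdots\rho_{i+1}\lambda_{i+1,i}\rho_{i+1}\cdots\rho_{j-1}$. $A_n=\langle\gamma_1,\dots,\gamma_n\rangle$; $\psi_P:TVP_n\to A_n$ is the homomorphism with $\lambda_{kl}\mapsto e$, $\gamma_j\mapsto\gamma_j$; $PL_n=\ker\psi_P$. $TS_n=\langle\rho_1,\dots,\rho_{n-1},\gamma_1,\dots,\gamma_n\rangle\le TVB_n$, and $\varphi_{PT}:TVB_n\to TS_n$ is the homomorphism $\sigma_i\mapsto\rho_i$, $\rho_i\mapsto\rho_i$, $\gamma_j\mapsto\gamma_j$; $PT_n=\ker\varphi_{PT}$. *)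

(* Groups given by presentations
   are modelled as words in the generators modulo the congruence generated by
   free cancellation and the defining relations (a setoid presentation). *)
From mathcomp Require Import all_boot.
Set Implicit Arguments. Unset Strict Implicit. Unset Printing Implicit Defensive.

(* Generators of TVB_n, with the paper's 1-based indices:
   Sig i = sigma_i, Rho i = rho_i (1 <= i <= n-1), Gam j = gamma_j (1 <= j <= n). *)
Inductive gen := Sig of nat | Rho of nat | Gam of nat.

(* A letter is a generator together with an exponent sign (true = inverse). *)
Definition letter := (gen * bool)%type.
Definition word := seq letter.

Definition gen_valid (n : nat) (g : gen) : bool :=
  match g with
  | Sig i | Rho i => (1 <= i) && (i <= n - 1)
  | Gam j => (1 <= j) && (j <= n)
  end.

Definition wf (n : nat) (w : word) : bool := all (fun x => gen_valid n x.1) w.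

Definition flip (x : letter) : letter := (x.1, ~~ x.2).
Definition winv (w : word) : word := rev (map flip w).

Definition s (i : nat) : word := [:: (Sig i, false)].
Definition si (i : nat) : word := [:: (Sig i, true)].
Definition r (i : nat) : word := [:: (Rho i, false)].
Definition g (j : nat) : word := [:: (Gam j, false)].

Definition far (i j : nat) : bool := (i + 2 <= j) || (j + 2 <= i).

Inductive defrel (n : nat) : word -> word -> Prop :=
| R_ss3 i : 1 <= i -> i <= n - 2 ->
    defrel n (s i ++ s i.+1 ++ s i) (s i.+1 ++ s i ++ s i.+1)
| R_ss2 i j : 1 <= i <= n - 1 -> 1 <= j <= n - 1 -> far i j ->
    defrel n (s i ++ s j) (s j ++ s i)
| R_rr i : 1 <= i <= n - 1 -> defrel n (r i ++ r i) [::]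
| R_rr2 i j : 1 <= i <= n - 1 -> 1 <= j <= n - 1 -> far i j ->
    defrel n (r i ++ r j) (r j ++ r i)
| R_rr3 i : 1 <= i -> i <= n - 2 ->
    defrel n (r i ++ r i.+1 ++ r i) (r i.+1 ++ r i ++ r i.+1)
| R_sr i j : 1 <= i <= n - 1 -> 1 <= j <= n - 1 -> far i j ->
    defrel n (s i ++ r j) (r j ++ s i)
| R_rrs i : 1 <= i -> i <= n - 2 ->
    defrel n (r i ++ r i.+1 ++ s i) (s i.+1 ++ r i ++ r i.+1)
| R_gg i : 1 <= i <= n -> defrel n (g i ++ g i) [::]
| R_gg2 i j : 1 <= i <= n -> 1 <= j <= n -> defrel n (g i ++ g j) (g j ++ g i)
| R_gr i j : 1 <= i <= n - 1 -> 1 <= j <= n -> j != i -> j != i.+1 ->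
    defrel n (g j ++ r i) (r i ++ g j)
| R_gs i j : 1 <= i <= n - 1 -> 1 <= j <= n -> j != i -> j != i.+1 ->
    defrel n (g j ++ s i) (s i ++ g j)
| R_rg i : 1 <= i <= n - 1 -> defrel n (r i ++ g i) (g i.+1 ++ r i)
| R_rsr i : 1 <= i <= n - 1 ->
    defrel n (r i ++ s i ++ r i) (g i.+1 ++ g i ++ s i ++ g i ++ g i.+1).

Inductive eqv (n : nat) : word -> word -> Prop :=
| eqv_refl w : eqv n w w
| eqv_sym u v : eqv n u v -> eqv n v u
| eqv_trans u v w : eqv n u v -> eqv n v w -> eqv n u w
| eqv_cat u u' v v' : eqv n u u' -> eqv n v v' -> eqv n (u ++ v) (u' ++ v')
| eqv_free x : eqv n [:: x; flip x] [::]
| eqv_rel u v : defrel n u v -> eqv n u v.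

(* phi_P : TVB_n -> S_n, sigma_i, rho_i |-> (i, i+1), gamma_j |-> e,
   realised as the induced permutation of nat (only 1..n is moved). *)
Definition transp (i k : nat) : nat :=
  if k == i then i.+1 else if k == i.+1 then i else k.
Definition perm_letter (x : letter) : nat -> nat :=
  match x.1 with Sig i | Rho i => transp i | Gam _ => id end.
Definition phiP (w : word) : nat -> nat :=
  foldr (fun x f => perm_letter x \o f) id w.

Definition TVP (n : nat) (w : word) : Prop := wf n w /\ forall k, phiP w k = k.

Definition phiPT_letter (x : letter) : letter :=
  match x.1 with Sig i => (Rho i, x.2) | _ => x end.
Definition phiPT (w : word) : word := map phiPT_letter w.

Definition PT (n : nat) (w : word) : Prop := wf n w /\ eqv n (phiPT w) [::].

Definition A_sub (n : nat) (w : word) : Prop :=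
  exists u : word, all (fun x => if x.1 is Gam j then (1 <= j) && (j <= n) else false) u
                   /\ eqv n w u.

Definition lam_up (i : nat) : word := r i ++ si i.
Definition lam_dn (i : nat) : word := r i ++ lam_up i ++ r i.
Definition rhos_up (i j : nat) : word := flatten (map r (iota i.+1 (j - i.+1))).
Definition rhos_down (i j : nat) : word := flatten (map r (rev (iota i.+1 (j - i.+1)))).
(* for 1 <= i < j <= n (j = i+1 gives the basic ones, as the rho-strings are empty) *)
Definition lam (k l : nat) : word :=
  if k < l then rhos_down k l ++ lam_up k ++ rhos_up k l
  else rhos_down l k ++ lam_dn l ++ rhos_up l k.

Definition is_psiP (n : nat) (psi : word -> word) : Prop :=
  [/\ (forall x y, TVP n x -> TVP n y -> eqv n x y -> eqv n (psi x) (psi y)),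
      (forall x y, TVP n x -> TVP n y -> eqv n (psi (x ++ y)) (psi x ++ psi y)),
      (forall x, TVP n x -> A_sub n (psi x)),
      (forall k l, 1 <= k <= n -> 1 <= l <= n -> k != l -> eqv n (psi (lam k l)) [::])
    & (forall j, 1 <= j <= n -> eqv n (psi (g j)) (g j))].

Definition PL (n : nat) (psi : word -> word) (w : word) : Prop :=
  TVP n w /\ eqv n (psi w) [::].

Definition subgroup_iso (n : nat) (H K : word -> Prop) : Prop :=
  exists f : word -> word,
    [/\ (forall x y, H x -> H y -> eqv n x y -> eqv n (f x) (f y)),
        (forall x, H x -> K (f x)),
        (forall x y, H x -> H y -> eqv n (f (x ++ y)) (f x ++ f y)),
        (forall x y, H x -> H y -> eqv n (f x) (f y) -> eqv n x y)
      & (forall z, K z -> exists2 x, H x & eqv n (f x) z)].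

From mathcomp Require Import all_boot zify.
From Stdlib Require Import Setoid Morphisms.
Set Implicit Arguments. Unset Strict Implicit. Unset Printing Implicit Defensive.

(* PT_n and PL_n are the same subgroup of TVB_n, so the identity is the
   isomorphism.  Since sigma_i = lambda_{i,i+1}^-1 rho_i, every word w equals
   X phi_PT(w) with X a product of TS_n-conjugates of lambda_{i,i+1}^(+-1).
   Such conjugates lie in PL_n: a TS_n-word is a gamma-word a times a rho-word,
   lambda_{i,i+1} is a rho-conjugate of lambda_{12}, and for every rho-word q,
   q lambda_{12} q^-1 = lambda_{q(1) q(2)}, because a rho-word fixing 1 and 2
   is, by faithfulness of the Coxeter presentation of S_n, a word in
   rho_3, ..., rho_(n-1), which commute with lambda_{12}.  So each conjugate is
   an a-conjugate of some lambda_{kl}^(+-1), which psi_P kills, and if w is in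
   PT_n then w = X lies in PL_n.  Conversely, if w is in PL_n then so is
   phi_PT(w) = a p, with a a gamma-word and p a rho-word; p is trivial in S_n,
   hence trivial, and psi_P(a) = a, so phi_PT(w) = 1. *)

Lemma flipK : involutive flip.
Proof. by case=> x b; rewrite /flip negbK. Qed.

Lemma winvK : involutive winv.
Proof. by move=> w; rewrite /winv map_rev revK -map_comp (eq_map flipK) map_id. Qed.

Lemma winv_cat u v : winv (u ++ v) = winv v ++ winv u.
Proof. by rewrite /winv map_cat rev_cat. Qed.

#[export] Instance eqv_Equivalence n : Equivalence (eqv n).
Proof. by split; [exact: eqv_refl | exact: eqv_sym | exact: eqv_trans]. Qed.

#[export] Hint Resolve eqv_refl : core.

#[export] Instance cat_eqv_Proper n : Proper (eqv n ==> eqv n ==> eqv n) (@cat letter).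
Proof. by move=> ? ? ? ? ? ?; apply: eqv_cat. Qed.

Lemma phiP_cat u v k : phiP (u ++ v) k = phiP u (phiP v k).
Proof. by elim: u => //= x u ->. Qed.

Lemma phiP_cons x w k : phiP (x :: w) k = perm_letter x (phiP w k).
Proof. by []. Qed.

(* Split on the innermost tests of nested [transp]s first, then use lia. *)
Ltac transp_lia := rewrite /transp; repeat match goal with |- context [?a == ?b] =>
   tryif (match a with context[if _ then _ else _] => idtac end) then fail else
   (case: (a =P b) => ?) end; lia.

Lemma transpK i : involutive (transp i).
Proof. move=> k; transp_lia. Qed.

(** * Words modulo the relations of TVB_n *)

Section Presentation.
Variable n : nat.
Local Notation "u ≡ v" := (eqv n u v) (at level 70).

Lemma mulwV w : w ++ winv w ≡ [::].
Proof.
elim: w => [|x w IH] //.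
have -> : winv (x :: w) = winv w ++ [:: flip x] by rewrite /winv /= rev_cons cats1.
by rewrite -cat1s -!catA (catA w) IH; apply: eqv_free.
Qed.

Lemma mulVw w : winv w ++ w ≡ [::].
Proof. by rewrite -{2}(winvK w) mulwV. Qed.

Lemma eqv_idem u : u ≡ u ++ u -> u ≡ [::].
Proof. by move=> E; rewrite -[u]cats0 -(mulwV u) catA -E mulwV. Qed.

Lemma eqv_winv u v : u ≡ v -> winv u ≡ winv v.
Proof.
move=> E; transitivity (winv u ++ (u ++ winv v)); last by rewrite catA mulVw.
transitivity (winv u ++ (v ++ winv v)); first by rewrite mulwV cats0.
by apply: eqv_cat => //; apply: eqv_cat => //; symmetry.
Qed.

Lemma comm_winv u v : u ++ v ≡ v ++ u -> winv u ++ v ≡ v ++ winv u.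
Proof.
move=> E; rewrite -[winv u ++ v]cats0 -(mulwV u) -catA (catA v) -E.
by rewrite !catA mulVw.
Qed.

#[local] Instance winv_eqv_Proper : Proper (eqv n ==> eqv n) winv.
Proof. by move=> ? ?; apply: eqv_winv. Qed.

Lemma phiP_eqv u v : u ≡ v -> phiP u =1 phiP v.
Proof.
elim=> {u v} //.
- by move=> u v _ H k; rewrite H.
- by move=> u v w _ H1 _ H2 k; rewrite H1 H2.
- by move=> u u' v v' _ H1 _ H2 k; rewrite !phiP_cat H1 H2.
- by case=> [[i|i|i] b] k //=; rewrite /perm_letter /= transpK.
- by move=> u v [] {u v}; rewrite /far => * k /=; rewrite /perm_letter /=; transp_lia.
Qed.

Lemma phiP_winvK w : cancel (phiP w) (phiP (winv w)).
Proof. by move=> k; rewrite -phiP_cat (phiP_eqv (mulVw w)). Qed.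

Lemma phiP_winvKV w : cancel (phiP (winv w)) (phiP w).
Proof. by move=> k; rewrite -phiP_cat (phiP_eqv (mulwV w)). Qed.

Lemma phiP_inj w : injective (phiP w).
Proof. exact: can_inj (phiP_winvK w). Qed.

Lemma winv_involution u : u ++ u ≡ [::] -> winv u ≡ u.
Proof. by move=> E; rewrite -[winv u]cat0s -E -catA mulwV cats0. Qed.

Lemma r_sqr i : 1 <= i <= n - 1 -> r i ++ r i ≡ [::].
Proof. by move=> Hi; apply/eqv_rel/R_rr. Qed.

Lemma r_sqrK i w : 1 <= i <= n - 1 -> r i ++ r i ++ w ≡ w.
Proof. by move=> Hi; rewrite catA r_sqr. Qed.

Lemma g_sqr j : 1 <= j <= n -> g j ++ g j ≡ [::].
Proof. by move=> Hj; apply/eqv_rel/R_gg. Qed.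

Lemma winv_r i : 1 <= i <= n - 1 -> winv (r i) ≡ r i.
Proof. by move/r_sqr/winv_involution. Qed.

Lemma winv_g j : 1 <= j <= n -> winv (g j) ≡ g j.
Proof. by move/g_sqr/winv_involution. Qed.

Lemma letter_rho x j : x.1 = Rho j -> 1 <= j <= n - 1 -> [:: x] ≡ r j.
Proof. by case: x => [[] // i [] /= [<-] Hj]; [exact: winv_r |]. Qed.

Lemma letter_gam x j : x.1 = Gam j -> 1 <= j <= n -> [:: x] ≡ g j.
Proof. by case: x => [[] // i [] /= [<-] Hj]; [exact: winv_g |]. Qed.

Lemma r_comm i j : 1 <= i <= n - 1 -> 1 <= j <= n - 1 -> far i j ->
  r i ++ r j ≡ r j ++ r i.
Proof. by move=> *; apply/eqv_rel/R_rr2. Qed.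

Lemma r_braid i w : 1 <= i -> i < n - 1 ->
  r i ++ r i.+1 ++ r i ++ w ≡ r i.+1 ++ r i ++ r i.+1 ++ w.
Proof.
move=> *; rewrite !catA; apply: eqv_cat => //.
by rewrite -!catA; apply/eqv_rel/R_rr3; lia.
Qed.

Lemma r_g_transp i j : 1 <= i <= n - 1 -> 1 <= j <= n -> r i ++ g j ≡ g (transp i j) ++ r i.
Proof.
move=> Hi Hj; rewrite /transp.
case: eqP => [->|Hji]; first by apply: eqv_rel; apply: R_rg.

case: eqP => [->|Hji1].
  have E : g i.+1 ++ r i ≡ r i ++ g i by symmetry; apply: eqv_rel; apply: R_rg.
  by rewrite -[_ ++ g _]cats0 -(r_sqr Hi) -catA (catA (g _)) E !catA r_sqr.
by symmetry; apply/eqv_rel/R_gr => //; apply/eqP.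
Qed.

Definition rho_word (a : nat) (w : word) : bool :=
  all (fun x => if x.1 is Rho j then a <= j < n else false) w.

Lemma rho_word_cat a u v : rho_word a (u ++ v) = rho_word a u && rho_word a v.
Proof. exact: all_cat. Qed.

Lemma rho_word_winv a w : rho_word a (winv w) = rho_word a w.
Proof. by rewrite /rho_word /winv all_rev all_map. Qed.

Lemma rho_word_letter a x : 0 < a -> rho_word a [:: x] ->
  exists j, [/\ a <= j, j <= n - 1 & [:: x] ≡ r j].
Proof.
rewrite /rho_word /= andbT; case E: x.1 => [|j|] // a0 Hj.
by exists j; split; [lia | lia | apply: letter_rho E _; lia].
Qed.

(** * The Coxeter presentation of S_n *)

Definition rhos (s : seq nat) : word := flatten (map r s).

Lemma rhos_cons j s : rhos (j :: s) = r j ++ rhos s. Proof. by []. Qed.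

Lemma rhos_cat s1 s2 : rhos (s1 ++ s2) = rhos s1 ++ rhos s2.
Proof. by rewrite /rhos map_cat flatten_cat. Qed.

Lemma rho_word_rhos a s : rho_word a (rhos s) = all (fun j => a <= j < n) s.
Proof. by elim: s => // j s IH; rewrite rhos_cons rho_word_cat IH /= andbT. Qed.

Lemma winv_rhos s : all (fun j => 0 < j < n) s -> winv (rhos s) ≡ rhos (rev s).
Proof.
elim: s => //= j s IH /andP[Hj Hs].
rewrite winv_cat IH // winv_r; last lia.
by rewrite rev_cons -cats1 rhos_cat.
Qed.

Lemma r_rhos_comm j s : 1 <= j <= n - 1 -> all (fun t => (0 < t < n) && far j t) s ->
  r j ++ rhos s ≡ rhos s ++ r j.
Proof.
move=> Hj; elim: s => [_|t s IH]; first by rewrite cats0.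
rewrite [all _ _]/= rhos_cons => /andP[/andP[Ht Hf] Hs].
by rewrite catA r_comm //; [rewrite -!catA IH | lia].
Qed.

Definition rcycle (a k : nat) : word := rhos (iota a (k - a)).

Lemma rcyclenn a : rcycle a a = [::].
Proof. by rewrite /rcycle subnn. Qed.

Lemma rcycle_split a m k : a <= m <= k -> rcycle a k = rcycle a m ++ rcycle m k.
Proof.
move=> Hm; rewrite /rcycle -rhos_cat {2}(_ : m = a + (m - a)) -?iotaD; last lia.
by congr (rhos (iota _ _)); lia.
Qed.

Lemma rcycleS a k : a <= k -> rcycle a k.+1 = rcycle a k ++ r k.
Proof.
move=> Hk; rewrite (@rcycle_split a k k.+1); last lia.
by rewrite /rcycle subSn // subnn.
Qed.

Lemma rcycleSS j k : j.+1 < k -> rcycle j k = r j ++ r j.+1 ++ rcycle j.+2 k.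
Proof. by move=> Hk; rewrite /rcycle (_ : k - j = (k - j.+2).+2) //; lia. Qed.

Lemma rcycle_r_comm a k j : 0 < a -> k <= n -> 1 <= j <= n - 1 -> (k < j) || (j.+2 <= a) ->
  rcycle a k ++ r j ≡ r j ++ rcycle a k.
Proof.
move=> *; symmetry; apply: r_rhos_comm => //.
by apply/allP => t; rewrite mem_iota /far; lia.
Qed.

Lemma phiP_rcycle a k : a <= k -> phiP (rcycle a k) k = a.
Proof.
elim: k => [|k IH] Hk; first by rewrite (_ : a = 0) ?rcyclenn //; lia.
case: (a =P k.+1) => [->|Hak]; first by rewrite rcyclenn.
rewrite rcycleS; last lia.
rewrite phiP_cat /= /perm_letter /= /transp eqxx ifN_eq ?IH //; lia.
Qed.

Lemma rcycle_mulr a k j : 0 < a -> a <= k <= n -> a <= j <= n - 1 ->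
  exists w k', [/\ rho_word a.+1 w, a <= k' <= n & rcycle a k ++ r j ≡ w ++ rcycle a k'].
Proof.
move=> Ha Hk Hj.
case: (j =P k) => [Ejk|Hjk]; first subst j.
  by exists [::], k.+1; rewrite rcycleS; [split => //; lia | lia].
case: (j.+1 =P k) => [Ejk|Hjk1]; first subst k.
  exists [::], j; split => //; first lia.
  by rewrite rcycleS -?catA ?r_sqr ?cats0 //; lia.
case: (ltnP k j) => Hkj.
  exists (r j), k; split; [rewrite /rho_word /=; lia | lia | apply: rcycle_r_comm; lia].
exists (r j.+1), k; split; [rewrite /rho_word /=; lia | lia |].
rewrite (@rcycle_split a j k) ?(@rcycleSS j k) -?catA; try lia.
rewrite (@rcycle_r_comm j.+2 k j) ?r_braid; try lia.
by rewrite (catA (rcycle a j)) (@rcycle_r_comm a j j.+1) -?catA //; lia.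
Qed.

Lemma rho_word_factor a w : 0 < a <= n -> rho_word a w ->
  exists w' k, [/\ rho_word a.+1 w', a <= k <= n & w ≡ w' ++ rcycle a k].
Proof.
move=> Ha; elim/last_ind: w => [_|w x IH].
  by exists [::], a; rewrite rcyclenn; split => //; lia.
rewrite -cats1 rho_word_cat => /andP[/IH [w' [k [Hw' Hk E]]] Hx].
have [j [Haj Hjn Ex]] := rho_word_letter (proj1 (andP Ha)) Hx.
have [w'' [k' [Hw'' Hk' E']]] := @rcycle_mulr a k j (proj1 (andP Ha)) Hk ltac:(lia).
exists (w' ++ w''), k'; split => //; first by rewrite rho_word_cat Hw'.
by rewrite E Ex -catA E' catA.
Qed.

Lemma phiP_rho_word_fix a w : rho_word a.+1 w -> phiP w a = a.
Proof.
elim: w => //= x w IH /andP[Hx /IH]; rewrite /perm_letter.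
by case: x.1 Hx => // j Hj ->; rewrite /transp; case: eqP; [lia | case: eqP; lia].
Qed.

Lemma rho_word_stab a w : 0 < a -> rho_word a w -> phiP w a = a ->
  exists2 w', rho_word a.+1 w' & w ≡ w'.
Proof.
move=> Ha Hw Hfix; case: (leqP a n) => Han; last first.
  by exists [::]; case: w Hw {Hfix} => // x w; rewrite /rho_word /=; case: x.1 => //; lia.
have [w' [k [Hw' Hk E]]] := rho_word_factor (introT andP (conj Ha Han)) Hw.
suff Eka : k = a by exists w'; rewrite // E Eka rcyclenn cats0.
apply/(@phiP_inj w); rewrite Hfix (phiP_eqv E) phiP_cat phiP_rcycle; last lia.
exact: phiP_rho_word_fix.
Qed.

(* Faithfulness of the Coxeter presentation of the symmetric group. *)
Lemma rho_word_trivial a w : 0 < a -> rho_word a w -> phiP w =1 id -> w ≡ [::].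
Proof.
move Em : (n - a) => m; elim: m a w Em => [|m IH] a w Em Ha Hw Hid.
  by case: w Hw {Hid} => // x w; rewrite /rho_word /=; case: x.1 => //; lia.
have [w' Hw' E] := rho_word_stab Ha Hw (Hid a).
rewrite E; apply: (IH a.+1) => //; first lia.
by move=> k; rewrite -(phiP_eqv E).
Qed.

(** * Conjugates of lambda_{12} *)

Definition conjw (c u : word) : word := c ++ u ++ winv c.

Lemma conjw_cat c d u : conjw (c ++ d) u = conjw c (conjw d u).
Proof. by rewrite /conjw winv_cat -!catA. Qed.

Lemma conjw_winv c u : conjw c (winv u) = winv (conjw c u).
Proof. by rewrite /conjw !winv_cat winvK catA. Qed.

Lemma conjw0 u : conjw [::] u = u.
Proof. by rewrite /conjw cats0. Qed.

Lemma conjwK c u : conjw c u ++ c ≡ c ++ u.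
Proof. by rewrite /conjw -!catA mulVw cats0. Qed.

Lemma conjw_catr c u v : conjw c (u ++ v) ≡ conjw c u ++ conjw c v.
Proof. by rewrite /conjw -!catA (catA (winv c)) mulVw. Qed.

#[local] Instance conjw_eqv_Proper : Proper (eqv n ==> eqv n ==> eqv n) conjw.
Proof. by move=> c c' Ec u u' Eu; rewrite /conjw Ec Eu. Qed.

Lemma phiP_conjw c u : phiP u =1 id -> phiP (conjw c u) =1 id.
Proof. by move=> Hu k; rewrite !phiP_cat Hu phiP_winvKV. Qed.

Lemma lam_up_step i : 1 <= i -> i < n - 1 ->
  lam_up i.+1 ≡ conjw (r i ++ r i.+1) (lam_up i).
Proof.
move=> Hi Hin.
have Hrrs : r i ++ r i.+1 ++ s i ≡ s i.+1 ++ r i ++ r i.+1 by apply/eqv_rel/R_rrs; lia.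
have {}Hrrs : si i ++ r i.+1 ++ r i ≡ r i.+1 ++ r i ++ si i.+1.
  by move/eqv_winv: Hrrs; rewrite !winv_cat !winv_r -?catA; try lia.
rewrite /conjw /lam_up winv_cat !winv_r; try lia.
by rewrite -!catA Hrrs r_braid ?(r_sqrK (i := i.+1)) ?r_sqrK //; lia.
Qed.

Fixpoint lam_shift (m : nat) : word :=
  if m is m'.+1 then (if m' is 0 then [::] else r m' ++ r m ++ lam_shift m') else [::].

Lemma lam_shiftSS m : lam_shift m.+2 = r m.+1 ++ r m.+2 ++ lam_shift m.+1.
Proof. by []. Qed.

Lemma lam_up_shift m : 1 <= m <= n - 1 -> lam_up m ≡ conjw (lam_shift m) (lam_up 1).
Proof.
elim: m => [|[|m] IH] Hm //.
by rewrite lam_up_step ?IH -?conjw_cat -?catA //; lia.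
Qed.

Lemma phiP_lam_shift m : 1 <= m -> phiP (lam_shift m) 1 = m /\ phiP (lam_shift m) 2 = m.+1.
Proof.
elim: m => [|[|m] IH] Hm //.
have [E1 E2] := IH isT.
by rewrite lam_shiftSS !phiP_cat E1 E2 /= /perm_letter /=; split; transp_lia.
Qed.

Lemma rho_word_lam_shift m : m <= n - 1 -> rho_word 1 (lam_shift m).
Proof.
elim: m => [|[|m] IH] Hm //.
by rewrite lam_shiftSS !rho_word_cat IH /rho_word /= ?andbT; lia.
Qed.

Lemma rho_word_rhos_down k l : k < l <= n -> rho_word 1 (rhos_down k l).
Proof.
move=> Hkl; rewrite [rhos_down _ _]/(rhos _) rho_word_rhos all_rev.
by apply/allP => t; rewrite mem_iota; lia.
Qed.

Lemma rho_word_rhos_up k l : k < l <= n -> rho_word 1 (rhos_up k l).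
Proof.
move=> Hkl; rewrite [rhos_up _ _]/(rhos _) rho_word_rhos.
by apply/allP => t; rewrite mem_iota; lia.
Qed.

Lemma phiP_rhos_down k l : k < l ->
  phiP (rhos_down k l) k = k /\ phiP (rhos_down k l) k.+1 = l.
Proof.
rewrite /rhos_down -/(rhos _) => Hkl; move: (subnKC Hkl); move: (l - k.+1) => m <-.
elim: m => [|m [IH1 IH2]]; first by rewrite addn0.
rewrite -[m.+1]addn1 iotaD rev_cat rhos_cat !phiP_cat IH1 IH2 /= /perm_letter /=.
by split; transp_lia.
Qed.

Lemma rhos_up_winv k l : k < l <= n -> rhos_up k l ≡ winv (rhos_down k l).
Proof.
move=> Hkl; rewrite /rhos_down -/(rhos _) winv_rhos ?revK //.
by rewrite all_rev; apply/allP => t; rewrite mem_iota; lia.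
Qed.

Lemma lam_conjw u v : 1 <= u <= n -> 1 <= v <= n -> u != v ->
  exists2 Q, rho_word 1 Q & [/\ phiP Q 1 = u, phiP Q 2 = v & lam u v ≡ conjw Q (lam_up 1)].
Proof.
move=> Hu Hv Huv; rewrite /lam; case: ltnP => Huv'.
  have [E1 E2] := @phiP_lam_shift u ltac:(lia).
  have [F1 F2] := phiP_rhos_down Huv'.
  exists (rhos_down u v ++ lam_shift u).
    by rewrite rho_word_cat rho_word_rhos_down ?rho_word_lam_shift //; lia.
  rewrite !phiP_cat E1 E2 F1 F2; split => //.
  by rewrite conjw_cat -lam_up_shift ?rhos_up_winv //; lia.
have {Huv'} Hvu : v < u by rewrite ltn_neqAle eq_sym Huv.
have [E1 E2] := @phiP_lam_shift v ltac:(lia).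
have [F1 F2] := phiP_rhos_down Hvu.
have Er : phiP (r v) v = v.+1 /\ phiP (r v) v.+1 = v.
  by split; rewrite /= /perm_letter /=; transp_lia.
exists (rhos_down v u ++ r v ++ lam_shift v).
  rewrite !rho_word_cat rho_word_rhos_down ?rho_word_lam_shift /rho_word /=; lia.
rewrite !phiP_cat E1 E2 (proj1 Er) (proj2 Er) F1 F2; split => //.
rewrite !conjw_cat -lam_up_shift ?rhos_up_winv; try lia.
by rewrite /conjw /lam_dn winv_r; last lia.
Qed.

Lemma r_lam_up1_comm t : 3 <= t <= n - 1 -> r t ++ lam_up 1 ≡ lam_up 1 ++ r t.
Proof.
move=> Ht; have Hs : s 1 ++ r t ≡ r t ++ s 1 by apply/eqv_rel/R_sr; rewrite /far; lia.
rewrite /lam_up catA r_comm /far; try lia.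
by rewrite -!catA (comm_winv Hs).
Qed.

Lemma rho_word_lam_up1_comm D : rho_word 3 D -> D ++ lam_up 1 ≡ lam_up 1 ++ D.
Proof.
elim: D => [|x D IH]; first by rewrite cats0.
rewrite -cat1s rho_word_cat => /andP[/rho_word_letter [//|j [Hj Hjn ->]] /IH E].
by rewrite -catA E catA r_lam_up1_comm ?catA //; lia.
Qed.

Lemma phiP_rho_word_range w k : rho_word 1 w -> 1 <= k <= n -> 1 <= phiP w k <= n.
Proof.
elim: w => //= x w IH /andP[Hx /IH {}IH] Hk; have := IH Hk.
by rewrite /perm_letter; case: x.1 Hx => // j Hj; rewrite /transp; case: eqP; [|case: eqP]; lia.
Qed.

Lemma conjw_lam_up1 q : 2 <= n -> rho_word 1 q ->
  [/\ 1 <= phiP q 1 <= n, 1 <= phiP q 2 <= n, phiP q 1 != phiP q 2 &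
      conjw q (lam_up 1) ≡ lam (phiP q 1) (phiP q 2)].
Proof.
move=> Hn Hq.
have Hu := @phiP_rho_word_range q 1 Hq ltac:(lia).
have Hv := @phiP_rho_word_range q 2 Hq ltac:(lia).
have Huv : phiP q 1 != phiP q 2 by apply/eqP => /phiP_inj.
split => //; have [Q HQ [Q1 Q2 ->]] := lam_conjw Hu Hv Huv.
have HD : rho_word 1 (winv Q ++ q) by rewrite rho_word_cat rho_word_winv HQ.
have D1 : phiP (winv Q ++ q) 1 = 1 by rewrite phiP_cat -Q1 phiP_winvK.
have [D' HD' ED'] := rho_word_stab (ltn0Sn 0) HD D1.
have D'2 : phiP D' 2 = 2 by rewrite -(phiP_eqv ED') phiP_cat -Q2 phiP_winvK.
have [D'' HD'' ED''] := rho_word_stab (ltn0Sn 1) HD' D'2.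
have -> : q ≡ Q ++ D'' by rewrite -ED'' -ED' catA mulwV.
by rewrite conjw_cat {2}/conjw catA rho_word_lam_up1_comm // -catA mulwV cats0.
Qed.

(** * Decomposition of words along phi_PT *)

Definition gam_word (w : word) : bool :=
  all (fun x => if x.1 is Gam j then (1 <= j) && (j <= n) else false) w.

Definition ts_word (w : word) : bool :=
  all (fun x => match x.1 with Sig _ => false | Rho j => 0 < j < n | Gam j => 0 < j <= n end) w.

Lemma gam_word_cat u v : gam_word (u ++ v) = gam_word u && gam_word v.
Proof. exact: all_cat. Qed.

Lemma ts_word_cat u v : ts_word (u ++ v) = ts_word u && ts_word v.
Proof. exact: all_cat. Qed.

Lemma phiP_gam_word a : gam_word a -> phiP a =1 id.
Proof.
elim: a => // x a IH /andP[Hx /IH Ha] k.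
by rewrite phiP_cons Ha /perm_letter; case: x.1 Hx.
Qed.

Lemma r_gam_word i a : 1 <= i <= n - 1 -> gam_word a ->
  exists2 a', gam_word a' & r i ++ a ≡ a' ++ r i.
Proof.
move=> Hi; elim: a => [|x a IH]; first by exists [::]; rewrite ?cats0.
rewrite -cat1s gam_word_cat => /andP[Hx /IH [a' Ha' E]].
rewrite /gam_word /= andbT in Hx; case Ex: x.1 Hx => [||j] // Hj.
exists (g (transp i j) ++ a').
  by rewrite gam_word_cat Ha' /gam_word /= andbT /transp; case: eqP; [|case: eqP]; lia.
by rewrite (letter_gam Ex Hj) catA r_g_transp // -catA E catA.
Qed.

Lemma ts_word_split c : ts_word c ->
  exists a p, [/\ gam_word a, rho_word 1 p & c ≡ a ++ p].
Proof.
elim: c => [|x c IH]; first by exists [::], [::].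
rewrite -cat1s ts_word_cat => /andP[Hx /IH [a [p [Ha Hp E]]]].
rewrite /ts_word /= andbT in Hx; case Ex: x.1 Hx => [|j|j] // Hj.
  have [a' Ha' Ea] := @r_gam_word j a ltac:(lia) Ha.
  exists a', (r j ++ p); split => //; first by rewrite rho_word_cat Hp /rho_word /= Hj.
  by rewrite E (letter_rho Ex) ?catA ?Ea //; lia.
exists ([:: x] ++ a), p; split => //; last by rewrite E catA.
by rewrite gam_word_cat Ha /gam_word /= Ex Hj.
Qed.

Lemma wf_cat u v : wf n (u ++ v) = wf n u && wf n v.
Proof. exact: all_cat. Qed.

Lemma wf_winv w : wf n (winv w) = wf n w.
Proof. by rewrite /wf /winv all_rev all_map. Qed.

Lemma wf_conjw c u : wf n c -> wf n u -> wf n (conjw c u).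
Proof. by move=> Hc Hu; rewrite !wf_cat wf_winv Hc Hu. Qed.

Lemma wf_ts_word w : ts_word w -> wf n w.
Proof. by apply: sub_all => x; rewrite /gen_valid; case: x.1 => // j; lia. Qed.

Lemma wf_gam_word w : gam_word w -> wf n w.
Proof. by apply: sub_all => x; rewrite /gen_valid; case: x.1. Qed.

Lemma wf_rho_word w : rho_word 1 w -> wf n w.
Proof. by apply: sub_all => x; rewrite /gen_valid; case: x.1 => // j; lia. Qed.

Lemma wf_lam_up i : 1 <= i <= n - 1 -> wf n (lam_up i).
Proof. by move=> Hi; rewrite /wf /= Hi. Qed.

Lemma wf_lam u v : 1 <= u <= n -> 1 <= v <= n -> u != v -> wf n (lam u v).
Proof.
move=> Hu Hv Huv.
have Wrhos k l : k < l <= n -> wf n (rhos_down k l) && wf n (rhos_up k l).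
  by move=> Hkl; rewrite !wf_rho_word ?rho_word_rhos_down ?rho_word_rhos_up.
rewrite /lam; case: ltnP => Huv'; rewrite !wf_cat.
  by case/andP: (@Wrhos u v ltac:(lia)) => -> ->; rewrite /wf /=; lia.
have Hvu : v < u by rewrite ltn_neqAle eq_sym Huv.
by case/andP: (@Wrhos v u ltac:(lia)) => -> ->; rewrite /wf /=; lia.
Qed.

Lemma TVP_nil : TVP n [::].
Proof. by []. Qed.

Lemma TVP_cat u v : TVP n u -> TVP n v -> TVP n (u ++ v).
Proof. by move=> [Wu Pu] [Wv Pv]; split=> [|k]; rewrite ?wf_cat ?Wu // phiP_cat Pv Pu. Qed.

Lemma TVP_winv w : TVP n w -> TVP n (winv w).
Proof. by move=> [Ww Pw]; split=> [|k]; rewrite ?wf_winv // -{1}(Pw k) phiP_winvK. Qed.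

Lemma TVP_eqv u v : wf n v -> TVP n u -> u ≡ v -> TVP n v.
Proof. by move=> Wv [_ Pu] E; split=> // k; rewrite -(phiP_eqv E). Qed.

Lemma TVP_conjw c u : wf n c -> TVP n u -> TVP n (conjw c u).
Proof. by move=> Wc [Wu Pu]; split; [apply: wf_conjw | apply: phiP_conjw]. Qed.

Lemma TVP_gam_word a : gam_word a -> TVP n a.
Proof. by move=> Ha; split; [apply: wf_gam_word | apply: phiP_gam_word]. Qed.

Lemma TVP_lam u v : 1 <= u <= n -> 1 <= v <= n -> u != v -> TVP n (lam u v).
Proof.
move=> Hu Hv Huv; split; first exact: wf_lam.
have [Q _ [_ _ E]] := lam_conjw Hu Hv Huv.
move=> k; rewrite (phiP_eqv E); move: k; apply: phiP_conjw => k.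
by rewrite /= /perm_letter /= transpK.
Qed.

Definition wsign (e : bool) (w : word) : word := if e then winv w else w.


#[local] Instance wsign_eqv_Proper e : Proper (eqv n ==> eqv n) (wsign e).
Proof. by case: e => u v E //=; apply: eqv_winv. Qed.

Lemma conjw_wsign c e u : conjw c (wsign e u) = wsign e (conjw c u).
Proof. by case: e => //; apply: conjw_winv. Qed.

Lemma wf_wsign e w : wf n (wsign e w) = wf n w.
Proof. by case: e => //; apply: wf_winv. Qed.

Lemma TVP_wsign e w : TVP n w -> TVP n (wsign e w).
Proof. by case: e => //; apply: TVP_winv. Qed.

Lemma phiP_phiPT w : phiP (phiPT w) =1 phiP w.
Proof. by elim: w => // x w IH k; rewrite /= IH; case: x => [[]]. Qed.

Lemma ts_word_phiPT w : wf n w -> ts_word (phiPT w).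
Proof. by elim: w => // [[[i|i|i] b] w IH] /= /andP[Hx /IH]; rewrite /ts_word /= => ->; lia. Qed.

(* The normal closure of the lambda_{i,i+1}; it is both PT_n and PL_n. *)
Inductive lamprod : word -> Prop :=
| lamprod_nil : lamprod [::]
| lamprod_cons c i e X : ts_word c -> 1 <= i <= n - 1 -> lamprod X ->
    lamprod (conjw c (wsign e (lam_up i)) ++ X).

Lemma lamprod_cat X Y : lamprod X -> lamprod Y -> lamprod (X ++ Y).
Proof. by move=> HX HY; elim: HX => // c i e X' Hc Hi _ IH; rewrite -catA; constructor. Qed.

Lemma lamprod_conjw d X : ts_word d -> lamprod X -> exists2 Y, lamprod Y & conjw d X ≡ Y.
Proof.
move=> Hd; elim=> [|c i e X' Hc Hi _ [Y HY E]].
  by exists [::]; [exact: lamprod_nil | exact: mulwV].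
exists (conjw (d ++ c) (wsign e (lam_up i)) ++ Y); first by constructor; rewrite ?ts_word_cat ?Hd.
by rewrite conjw_catr E conjw_cat.
Qed.

Lemma letter_decomp x : gen_valid n x.1 ->
  exists2 Y, lamprod Y & [:: x] ≡ Y ++ [:: phiPT_letter x].
Proof.
case: x => [[i|i|j] []] Hx; rewrite /= in Hx; try by exists [::]; [exact: lamprod_nil |].
- exists (conjw (winv (r i)) (wsign false (lam_up i)) ++ [::]).
    by apply: lamprod_cons; [rewrite /ts_word /=; lia | exact: Hx | exact: lamprod_nil].
  rewrite cats0; change [:: phiPT_letter _] with (winv (r i)).
  by rewrite conjwK /wsign /lam_up catA mulVw; reflexivity.
- exists (conjw [::] (wsign true (lam_up i)) ++ [::]).
    by apply: lamprod_cons; [| exact: Hx | exact: lamprod_nil].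
  rewrite cats0 conjw0; change [:: phiPT_letter _] with (r i).
  by rewrite /wsign /lam_up winv_cat -catA mulVw cats0; reflexivity.
Qed.

Lemma lamprod_decomp w : wf n w -> exists2 X, lamprod X & w ≡ X ++ phiPT w.
Proof.
elim: w => [|x w IH]; first by exists [::]; [exact: lamprod_nil |].
rewrite -cat1s wf_cat => /andP[Hx /IH [X HX E]].
have [Y HY Ex] : exists2 Y, lamprod Y & [:: x] ≡ Y ++ [:: phiPT_letter x].
  by apply: letter_decomp; move: Hx; rewrite /wf /= andbT.
have [Z HZ EZ] := lamprod_conjw (ts_word_phiPT Hx) HX.
exists (Y ++ Z); first exact: lamprod_cat.
have -> : phiPT ([:: x] ++ w) = [:: phiPT_letter x] ++ phiPT w by [].
by rewrite Ex {1}E -EZ -!catA (catA (winv _)) mulVw.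
Qed.

(** * The kernel of psi_P *)

Section Kernel.
Variable psi : word -> word.
Hypothesis psiP : is_psiP n psi.

Lemma psi_nil : psi [::] ≡ [::].
Proof. by case: psiP => _ psi_cat _ _ _; apply/eqv_idem/(psi_cat [::] [::]). Qed.

Lemma psi_wsign_trivial e w : TVP n w -> psi w ≡ [::] -> psi (wsign e w) ≡ [::].
Proof.
case: e => // Tw Pw; case: psiP => psi_eqv psi_cat _ _ _.
have Tw' := TVP_winv Tw.
rewrite /wsign -[psi (winv w)]cat0s -{1}Pw -psi_cat //.
by rewrite (psi_eqv _ _ (TVP_cat Tw Tw') TVP_nil (mulwV w)) psi_nil.
Qed.

Lemma psi_conjw_trivial a w : TVP n a -> TVP n w -> psi w ≡ [::] -> psi (conjw a w) ≡ [::].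
Proof.
case: psiP => psi_eqv psi_cat _ _ _ Ta Tw Pw; have Ta' := TVP_winv Ta.
rewrite /conjw (psi_cat _ _ Ta (TVP_cat Tw Ta')) (psi_cat _ _ Tw Ta') Pw cat0s.
rewrite -(psi_cat _ _ Ta Ta').
by rewrite (psi_eqv _ _ (TVP_cat Ta Ta') TVP_nil (mulwV a)) psi_nil.
Qed.

Lemma psi_gam_word a : gam_word a -> psi a ≡ a.
Proof.
case: psiP => psi_eqv psi_cat _ _ psi_g.
elim: a => [|x a IH]; first by rewrite psi_nil.
rewrite -cat1s gam_word_cat => /andP[Hx /[dup] Ha /IH Pa].
rewrite (psi_cat _ _ (TVP_gam_word Hx) (TVP_gam_word Ha)) Pa; apply: eqv_cat => //.
rewrite /gam_word /= andbT in Hx; case Ex: x.1 Hx => [||j] // Hj.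
have Tj : TVP n (g j) by apply: TVP_gam_word; rewrite /gam_word /= Hj.
have Tx : TVP n [:: x] by apply: TVP_gam_word; rewrite /gam_word /= Ex Hj.
by rewrite (psi_eqv _ _ Tx Tj (letter_gam Ex Hj)) psi_g // (letter_gam Ex Hj).
Qed.

Hypothesis n_gt1 : 1 < n.

Lemma lam_atom_ker c i e : ts_word c -> 1 <= i <= n - 1 ->
  TVP n (conjw c (wsign e (lam_up i))) /\ psi (conjw c (wsign e (lam_up i))) ≡ [::].
Proof.
case: psiP => psi_eqv _ _ psi_lam _ Hc Hi.
have [a [p [Ha Hp Ec]]] := ts_word_split Hc.
have Hq : rho_word 1 (p ++ lam_shift i) by rewrite rho_word_cat Hp rho_word_lam_shift //; lia.
have [Hu Hv Huv EM] := conjw_lam_up1 n_gt1 Hq.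
set M := lam _ _ in EM.
have TM : TVP n (wsign e M) by apply/TVP_wsign/TVP_lam.
have PM : psi (wsign e M) ≡ [::] by apply: psi_wsign_trivial; [exact: TVP_lam | exact: psi_lam].
have E : conjw c (wsign e (lam_up i)) ≡ conjw a (wsign e M).
  by rewrite Ec (lam_up_shift Hi) !conjw_wsign !conjw_cat -(conjw_cat p) EM.
have TA : TVP n (conjw a (wsign e M)) by apply: TVP_conjw => //; exact: wf_gam_word.
have TX : TVP n (conjw c (wsign e (lam_up i))).
  apply: TVP_eqv TA (eqv_sym E).
  by apply: wf_conjw; [exact: wf_ts_word | rewrite wf_wsign wf_lam_up].
split => //; rewrite (psi_eqv _ _ TX TA E).
by apply: psi_conjw_trivial => //; exact: TVP_gam_word.
Qed.

Lemma lamprod_ker X : lamprod X -> TVP n X /\ psi X ≡ [::].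
Proof.
case: psiP => _ psi_cat _ _ _.
elim=> [|c i e {}X Hc Hi _ [TX PX]]; first by split; [exact: TVP_nil | exact: psi_nil].
have [TA PA] := lam_atom_ker e Hc Hi.
by split; [exact: TVP_cat | rewrite psi_cat // PA PX].
Qed.

Lemma PT_sub_PL x : PT n x -> PL n psi x.
Proof.
case: psiP => psi_eqv _ _ _ _ [Wx Ex].
have [X HX E] := lamprod_decomp Wx.
have [TX PX] := lamprod_ker HX.
have Tx : TVP n x by split => // k; rewrite -phiP_phiPT (phiP_eqv Ex).
have Ex' : x ≡ X by rewrite E Ex cats0.
by split; last rewrite (psi_eqv _ _ Tx TX Ex').
Qed.

Lemma PL_sub_PT z : PL n psi z -> PT n z.
Proof.
case: psiP => psi_eqv psi_cat _ _ _ [[Wz Pz] Ez].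
have [X HX E] := lamprod_decomp Wz.
have [TX PX] := lamprod_ker HX.
have Ht := ts_word_phiPT Wz.
have Tt : TVP n (phiPT z) by split => [|k]; rewrite ?wf_ts_word // phiP_phiPT.
have Pt : psi (phiPT z) ≡ [::].
  rewrite -[psi _]cat0s -{1}PX -(psi_cat _ _ TX Tt).
  by rewrite -(psi_eqv _ _ (conj Wz Pz) (TVP_cat TX Tt) E).
have [a [p [Ha Hp Etp]]] := ts_word_split Ht.
have Ep : p ≡ [::].
  apply: (rho_word_trivial (ltn0Sn 0) Hp) => k.
  by rewrite -(phiP_gam_word Ha (phiP p k)) -phiP_cat -(phiP_eqv Etp) phiP_phiPT.
have Eta : phiPT z ≡ a by rewrite Etp Ep cats0.
split => //; rewrite Eta -(psi_gam_word Ha).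
by rewrite -(psi_eqv _ _ Tt (TVP_gam_word Ha) Eta).
Qed.

End Kernel.

End Presentation.

Theorem mainTheorem16 (n : nat) (psi : word -> word) :
  2 <= n -> is_psiP n psi -> subgroup_iso n (PT n) (PL n psi).
Proof.
move=> Hn Hpsi; exists id; split => //.
- exact: PT_sub_PL.
- by move=> z Hz; exists z; [exact: PL_sub_PT Hz | reflexivity].
Qed.
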